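(* Let $U$ be a unitary acting on $n$ qubits and let $\{u_1,\ldots,u_{2^n}\}$ be the columns of $U$. The unitary $U$ can be simulated using the unitary \[ U'=|0\rangle\langle 1|\otimes U+|1\rangle\langle 0|\otimes U^{\dagger}. \] The unitary $U'$ is a product of reflection operators constructed from the family of unit vectors \[ |w_j^{\pm}\rangle=\left(|1\rangle\otimes|j\rangle\pm|0\rangle\otimes|u_j\rangle\right)/\sqrt{2},\quad j=1,\ldots,2^n. \]
   Context: For a unit vector $|\psi\rangle$, the reflection operator is $R_{|\psi\rangle}=\mathbb{I}-2|\psi\rangle\langle\psi|$. Here $|j\rangle$ denotes the computational basis states of $n$ qubits and $|u_j\rangle$ the state given by the $j$-th column of $U$. ''Simulated'' means $U'$ maps $|1\rangle\otimes|\phi\rangle$ to $|0\rangle\otimes U|\phi\rangle$ for every $n$-qubit state $|\phi\rangle$ (using one ancilla qubit). *)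

From mathcomp Require Import all_boot all_order all_algebra.
From mathcomp Require Import spectral.
From mathcomp Require mxtens.
Set Implicit Arguments.
Unset Strict Implicit.
Unset Printing Implicit Defensive.
Import Order.TTheory GRing.Theory Num.Theory.
Local Open Scope ring_scope.

Section QDefs.
Context {C : numClosedFieldType}.

Definition adj {m n} (A : 'M[C]_(m, n)) : 'M[C]_(n, m) := (A ^t*)%sesqui.

(* Kronecker (tensor) product  A (x) B ; first factor = most significant index *)
Definition tens {m n p q} (A : 'M[C]_(m, n)) (B : 'M[C]_(p, q))
  : 'M[C]_(m * p, n * q) := mxtens.tensmx A B.

Definition ket {d} (k : 'I_d) : 'cV[C]_d := delta_mx k 0.

Definition ket0 : 'cV[C]_2 := ket (0 : 'I_2).
Definition ket1 : 'cV[C]_2 := ket (1 : 'I_2).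

Definition refl {d} (psi : 'cV[C]_d) : 'M[C]_d :=
  1%:M - 2%:R *: (psi *m adj psi).

Definition Uprime {N} (U : 'M[C]_N) : 'M[C]_(2 * N) :=
  tens (ket0 *m adj ket1) U + tens (ket1 *m adj ket0) (adj U).

Definition w_plus {N} (U : 'M[C]_N) (j : 'I_N) : 'cV[C]_(2 * N) :=
  (sqrtC 2%:R)^-1 *: (tens ket1 (ket j) + tens ket0 (col j U)).
Definition w_minus {N} (U : 'M[C]_N) (j : 'I_N) : 'cV[C]_(2 * N) :=
  (sqrtC 2%:R)^-1 *: (tens ket1 (ket j) - tens ket0 (col j U)).

Definition unit_vec {d} (v : 'cV[C]_d) : Prop := adj v *m v = 1%:M.

End QDefs.

(* Put e_j = |1>|j> and f_j = |0>|u_j>. Since U is unitary, the vectors e_j, f_j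
   form an orthonormal basis, so the w_j^+- = (e_j +- f_j)/sqrt 2 are orthonormal too.
   Reflections in pairwise orthogonal vectors multiply to I - 2 sum_j |w_j><w_j|, and
   expanding the outer products gives sum_j |w_j^+-><w_j^+-| = (I +- X)/2 with
   X = sum_j (|e_j><f_j| + |f_j><e_j|) = U'.  Hence the reflections in the w_j^- multiply
   to U' and those in the w_j^+ to -U'; in particular U', a product of reflections, is
   unitary. *)

From mathcomp Require Import all_boot all_order all_algebra.
From mathcomp Require Import spectral.
From mathcomp Require mxtens.
From mathcomp Require Import ring.
Set Implicit Arguments.
Unset Strict Implicit.
Unset Printing Implicit Defensive.
Import GRing.Theory Num.Theory.
Local Open Scope ring_scope.

Section Adjoint.
Variable C : numClosedFieldType.
Implicit Types (m n p q : nat).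

Lemma adjmxM m n p (A : 'M[C]_(m, n)) (B : 'M[C]_(n, p)) : adj (A *m B) = adj B *m adj A.
Proof. by rewrite /adj trmx_mul map_mxM. Qed.

Lemma adjmxD m n (A B : 'M[C]_(m, n)) : adj (A + B) = adj A + adj B.
Proof. by rewrite /adj linearD map_mxD. Qed.

Lemma adjmxN m n (A : 'M[C]_(m, n)) : adj (- A) = - adj A.
Proof. by rewrite /adj linearN map_mxN. Qed.

Lemma adjmxZ m n c (A : 'M[C]_(m, n)) : adj (c *: A) = c^* *: adj A.
Proof. by rewrite /adj linearZ map_mxZ. Qed.

Lemma adjmx0 m n : adj (0 : 'M[C]_(m, n)) = 0.
Proof. by rewrite /adj trmx0 map_mx0. Qed.

Lemma adjmx1 n : adj (1%:M : 'M[C]_n) = 1%:M.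
Proof. by rewrite /adj trmx1 map_mx1. Qed.

Lemma adjmxK m n (A : 'M[C]_(m, n)) : adj (adj A) = A.
Proof. exact: trmxCK. Qed.

Lemma adjmx_tens m n p q (A : 'M[C]_(m, n)) (B : 'M[C]_(p, q)) :
  adj (tens A B) = tens (adj A) (adj B).
Proof. by rewrite /adj /tens mxtens.trmx_tens mxtens.map_mxT. Qed.

Lemma adjmx_unitary n (A : 'M[C]_n) : A \is unitarymx -> adj A *m A = 1%:M.
Proof. by move/unitarymxP/mulmx1C. Qed.

End Adjoint.

Section Tensor.
Variable C : numClosedFieldType.
Implicit Types (m n p q : nat).

Lemma tensM m n p q r s (A : 'M[C]_(m, n)) (B : 'M[C]_(p, q))
    (A' : 'M[C]_(n, r)) (B' : 'M[C]_(q, s)) :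
  tens A B *m tens A' B' = tens (A *m A') (B *m B').
Proof. exact: mxtens.tensmx_mul. Qed.

Lemma tensDl m n p q (A B : 'M[C]_(m, n)) (M : 'M[C]_(p, q)) :
  tens (A + B) M = tens A M + tens B M.
Proof. by apply/matrixP=> i j; rewrite !mxE mulrDl. Qed.

Lemma tens0l m n p q (M : 'M[C]_(p, q)) : tens (0 : 'M[C]_(m, n)) M = 0.
Proof. exact: mxtens.tens0mx. Qed.

Lemma tens_sumr m n p q (I : finType) (A : 'M[C]_(m, n)) (F : I -> 'M[C]_(p, q)) :
  tens A (\sum_i F i) = \sum_i tens A (F i).
Proof.
apply/matrixP=> i j; rewrite !mxE !summxE mulr_sumr.
by apply: eq_bigr => k _; rewrite !mxE.
Qed.

Lemma tens1 m n : tens (1%:M : 'M[C]_m) (1%:M : 'M[C]_n) = 1%:M.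
Proof.
apply/matrixP=> i j.
case: (mxtens.mxtens_indexP i) => i1 i2; case: (mxtens.mxtens_indexP j) => j1 j2.
rewrite /tens mxtens.tensmxE !mxE.
rewrite (inj_eq (can_inj (@mxtens.mxtens_indexK _ _))) xpair_eqE.
by case: (i1 == j1); case: (i2 == j2); rewrite ?mulr1 ?mulr0.
Qed.

Lemma tens_dot k m (x y : 'cV[C]_k) (u v : 'cV[C]_m) :
  adj (tens x u : 'cV[C]_(k * m)) *m (tens y v : 'cV[C]_(k * m))
    = tens (adj x *m y) (adj u *m v).
Proof.
change (adj (tens x u) *m tens y v = tens (adj x *m y) (adj u *m v)).
by rewrite adjmx_tens tensM.
Qed.

Lemma tens_scalar11 (a b : C) : tens (a%:M : 'M[C]_1) (b%:M : 'M[C]_1) = (a * b)%:M.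
Proof. by apply/matrixP=> i j; rewrite !mxE !ord1 /= mulr1n. Qed.

End Tensor.

Section Columns.
Variable C : numClosedFieldType.

Lemma sum_col_outer m n p (A : 'M[C]_(m, n)) (B : 'M[C]_(p, n)) :
  \sum_j col j A *m adj (col j B) = A *m adj B.
Proof.
apply/matrixP=> i k; rewrite summxE !mxE.
by apply: eq_bigr => j _; rewrite !mxE big_ord1 !mxE.
Qed.

Lemma col_dot m n p (A : 'M[C]_(m, n)) (B : 'M[C]_(m, p)) j k :
  adj (col j A) *m col k B = ((adj A *m B) j k)%:M.
Proof.
apply/matrixP=> a b; rewrite !ord1 !mxE /= mulr1n.
by apply: eq_bigr => i _; rewrite !mxE.
Qed.

Lemma ket_dot d (i j : 'I_d) : adj (ket i : 'cV[C]_d) *m ket j = (i == j)%:R%:M.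
Proof. by rewrite /ket -!col1 col_dot adjmx1 mulmx1 mxE. Qed.

Lemma sum_ket_outer d : \sum_(i < d) ket i *m adj (ket i) = 1%:M :> 'M[C]_d.
Proof. by under eq_bigr do rewrite /ket -col1; rewrite sum_col_outer adjmx1 mulmx1. Qed.

Lemma qubit_outer_sum : ket0 *m adj ket0 + ket1 *m adj ket1 = 1%:M :> 'M[C]_2.
Proof. by rewrite -(sum_ket_outer 2) big_ord_recl big_ord1. Qed.

Lemma sum_tens_col_outer k m n p (x y : 'cV[C]_k)
    (A : 'M[C]_(m, n)) (B : 'M[C]_(p, n)) :
  \sum_j tens x (col j A) *m adj (tens y (col j B)) = tens (x *m adj y) (A *m adj B).
Proof.
under eq_bigr do rewrite adjmx_tens tensM.
by rewrite -tens_sumr sum_col_outer.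
Qed.

End Columns.

Section Reflections.
Variables (C : numClosedFieldType) (d : nat).

Lemma refl_unitary (v : 'cV[C]_d) : unit_vec v -> refl v \is unitarymx.
Proof.
move=> v_unit; apply/unitarymxP; change (refl v *m adj (refl v) = 1%:M).
have proj_idem : v *m adj v *m (v *m adj v) = v *m adj v.
  by rewrite mulmxA -(mulmxA v) v_unit mulmx1.
have refl_adj : adj (refl v) = refl v.
  by rewrite /refl adjmxD adjmxN adjmxZ adjmxM adjmxK adjmx1 conjC_nat.
rewrite refl_adj /refl mulmxBl mul1mx mulmxBr mulmx1 -scalemxAl -scalemxAr.
rewrite proj_idem scalerA -natrM.
by rewrite -scalerBl -addrA -opprD -scalerDl addrA -natrD subrr scale0r oppr0 addr0.
Qed.

Lemma prod_refl_orthogonal (I : eqType) (s : seq I) (v : I -> 'cV[C]_d) :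
    uniq s -> {in s &, forall j k, j != k -> adj (v j) *m v k = 0} ->
  \big[mulmx/1%:M]_(j <- s) refl (v j)
    = 1%:M - 2%:R *: \sum_(j <- s) v j *m adj (v j).
Proof.
elim: s => [|a s IH] /=; first by rewrite !big_nil scaler0 subr0.
case/andP=> a_notin_s s_uniq orth.
rewrite !big_cons IH // => [|j k js ks]; last by apply: orth; rewrite inE ?js ?ks orbT.
have cross : v a *m adj (v a) *m \sum_(j <- s) v j *m adj (v j) = 0.
  rewrite mulmx_sumr big_seq big1 // => j js.
  rewrite mulmxA -(mulmxA (v a)) orth ?mulmx0 ?mul0mx ?mem_head ?inE ?js ?orbT //.
  by apply: contraNneq a_notin_s => ->.
rewrite /refl mulmxBr mulmx1 mulmxBl mul1mx -scalemxAl -scalemxAr cross.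
by rewrite !scaler0 subr0 scalerDr opprD addrA.
Qed.

End Reflections.

Section Orthonormal.
Variables (C : numClosedFieldType) (d : nat) (I : finType).
Implicit Types v w : I -> 'cV[C]_d.

Definition orthonormal v := forall j k, adj (v j) *m v k = (j == k)%:R%:M.
Definition orthogonal v w := forall j k, adj (v j) *m w k = 0.

Lemma orthonormalN v : orthonormal v -> orthonormal (fun j => - v j).
Proof. by move=> v_on j k; rewrite adjmxN mulNmx mulmxN opprK v_on. Qed.

Lemma orthogonalN v w : orthogonal v w -> orthogonal v (fun j => - w j).
Proof. by move=> vw j k; rewrite mulmxN vw oppr0. Qed.

Lemma orthogonal_sym v w : orthogonal v w -> orthogonal w v.
Proof. by move=> vw j k; rewrite -[v k]adjmxK -adjmxM vw adjmx0. Qed.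

End Orthonormal.

Section OrthonormalSum.
Variables (C : numClosedFieldType) (d : nat) (I : finType) (a b : I -> 'cV[C]_d) (c : C).
Hypotheses (a_on : orthonormal a) (b_on : orthonormal b) (ab : orthogonal a b).
Hypothesis c_half : 2%:R * (c * c^*) = 1.

Lemma orthonormal_sum : orthonormal (fun j => c *: (a j + b j)).
Proof.
move=> j k; rewrite adjmxZ adjmxD -scalemxAl -scalemxAr scalerA mulmxDl !mulmxDr.
rewrite a_on b_on ab (orthogonal_sym ab) addr0 add0r -raddfD scale_scalar_mx.
by congr (scalar_mx _); rewrite -[RHS]mul1r -c_half; ring.
Qed.

Lemma prod_refl_sum :
  \big[mulmx/1%:M]_j refl (c *: (a j + b j))
    = 1%:M - \sum_j (a j *m adj (a j) + b j *m adj (b j))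
           - \sum_j (a j *m adj (b j) + b j *m adj (a j)).
Proof.
rewrite prod_refl_orthogonal ?index_enum_uniq // => [|j k _ _ jk]; last first.
  by rewrite orthonormal_sum (negbTE jk) raddf0.
under eq_bigr => j _ do
  rewrite adjmxZ adjmxD -scalemxAl -scalemxAr scalerA mulmxDl !mulmxDr.
rewrite -scaler_sumr scalerA c_half scale1r -addrA -opprD -big_split /=.
by congr (_ - _); apply: eq_bigr => j _; rewrite [b j *m _ + _]addrC addrACA.
Qed.

End OrthonormalSum.

Lemma prod_refl_diff (C : numClosedFieldType) d (I : finType)
    (a b : I -> 'cV[C]_d) c :
    orthonormal a -> orthonormal b -> orthogonal a b -> 2%:R * (c * c^*) = 1 ->
  \big[mulmx/1%:M]_j refl (c *: (a j - b j))
    = 1%:M - \sum_j (a j *m adj (a j) + b j *m adj (b j))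
           + \sum_j (a j *m adj (b j) + b j *m adj (a j)).
Proof.
move=> a_on b_on ab c_half.
have sum_outer : \sum_j (a j *m adj (a j) + - b j *m adj (- b j))
    = \sum_j (a j *m adj (a j) + b j *m adj (b j)).
  by apply: eq_bigr => j _; rewrite adjmxN mulmxN mulNmx opprK.
have sum_cross : \sum_j (a j *m adj (- b j) + - b j *m adj (a j))
    = - \sum_j (a j *m adj (b j) + b j *m adj (a j)).
  by rewrite -sumrN; apply: eq_bigr => j _; rewrite adjmxN mulmxN mulNmx opprD.
rewrite (prod_refl_sum a_on (orthonormalN b_on) (orthogonalN ab) c_half).
by rewrite sum_outer sum_cross opprK.
Qed.

Lemma sqrtC2_inv_half {C : numClosedFieldType} :
  2%:R * ((sqrtC 2%:R)^-1 * ((sqrtC 2%:R)^-1)^*) = 1 :> C.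
Proof.
rewrite geC0_conj ?invr_ge0 ?sqrtC_ge0 ?ler0n // -expr2 exprVn sqrtCK.
by rewrite mulfV ?pnatr_eq0.
Qed.

Section Simulation.
Variables (C : numClosedFieldType) (N : nat) (U : 'M[C]_N).

Lemma Uprime_act (phi : 'cV[C]_N) : Uprime U *m tens ket1 phi = tens ket0 (U *m phi).
Proof.
rewrite /Uprime mulmxDl !tensM -!mulmxA !ket_dot /=.
by rewrite mulmx1 raddf0 mulmx0 tens0l addr0.
Qed.

Hypothesis U_unitary : U \is unitarymx.

Let e j := tens ket1 (col j (1%:M : 'M[C]_N)).
Let f j := tens ket0 (col j U).

Lemma e_orthonormal : orthonormal e.
Proof.
move=> j k; rewrite /e tens_dot ket_dot col_dot adjmx1 mulmx1 mxE.
by rewrite tens_scalar11 mul1r.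
Qed.

Lemma f_orthonormal : orthonormal f.
Proof.
move=> j k; rewrite /f tens_dot ket_dot col_dot adjmx_unitary // mxE.
by rewrite tens_scalar11 mul1r.
Qed.

Lemma e_f_orthogonal : orthogonal e f.
Proof. by move=> j k; rewrite /e /f tens_dot ket_dot raddf0 tens0l. Qed.

Lemma sum_outer_ef : \sum_j (e j *m adj (e j) + f j *m adj (f j)) = 1%:M.
Proof.
rewrite /e /f big_split /= !sum_tens_col_outer adjmx1 mulmx1 (unitarymxP U_unitary).
by rewrite -tensDl addrC qubit_outer_sum tens1.
Qed.

Lemma sum_cross_ef : \sum_j (e j *m adj (f j) + f j *m adj (e j)) = Uprime U.
Proof.
by rewrite /e /f big_split /= !sum_tens_col_outer mul1mx adjmx1 mulmx1 addrC.
Qed.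

Lemma w_plusE j : w_plus U j = (sqrtC 2%:R)^-1 *: (e j + f j).
Proof. by rewrite /w_plus /e col1. Qed.

Lemma w_minusE j : w_minus U j = (sqrtC 2%:R)^-1 *: (e j - f j).
Proof. by rewrite /w_minus /e col1. Qed.

Lemma w_plus_unit j : unit_vec (w_plus U j).
Proof.
have := orthonormal_sum e_orthonormal f_orthonormal e_f_orthogonal sqrtC2_inv_half.
by rewrite /unit_vec w_plusE => ->; rewrite eqxx.
Qed.

Lemma w_minus_unit j : unit_vec (w_minus U j).
Proof.
have := orthonormal_sum e_orthonormal (orthonormalN f_orthonormal)
  (orthogonalN e_f_orthogonal) sqrtC2_inv_half.
by rewrite /unit_vec w_minusE => ->; rewrite eqxx.
Qed.

Lemma prod_refl_w_plus : \big[mulmx/1%:M]_j refl (w_plus U j) = - Uprime U.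
Proof.
under eq_bigr do rewrite w_plusE.
rewrite (prod_refl_sum e_orthonormal f_orthonormal e_f_orthogonal sqrtC2_inv_half).
by rewrite sum_outer_ef sum_cross_ef subrr sub0r.
Qed.

Lemma prod_refl_w_minus : \big[mulmx/1%:M]_j refl (w_minus U j) = Uprime U.
Proof.
under eq_bigr do rewrite w_minusE.
rewrite (prod_refl_diff e_orthonormal f_orthonormal e_f_orthogonal sqrtC2_inv_half).
by rewrite sum_outer_ef sum_cross_ef subrr add0r.
Qed.

Lemma Uprime_unitary : Uprime U \is unitarymx.
Proof.
rewrite -prod_refl_w_minus; apply: (big_ind (fun M => M \is unitarymx)).
- apply/unitarymxP; change (1%:M *m adj 1%:M = 1%:M :> 'M[C]_(2 * N)).
  by rewrite adjmx1 mulmx1.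
- exact: mul_unitarymx.
- by move=> j _; apply/refl_unitary/w_minus_unit.
Qed.

End Simulation.

Theorem lemma3 (C : numClosedFieldType) (n : nat) (U : 'M[C]_(2 ^ n))
    (HU : U \is unitarymx) :
  [/\ Uprime U \is unitarymx,
      (forall phi : 'cV[C]_(2 ^ n),
          Uprime U *m tens ket1 phi = tens ket0 (U *m phi)),
      (forall j : 'I_(2 ^ n), unit_vec (w_plus U j) /\ unit_vec (w_minus U j)),
      Uprime U = \big[mulmx/1%:M]_(j < 2 ^ n) refl (w_minus U j)
    & - Uprime U = \big[mulmx/1%:M]_(j < 2 ^ n) refl (w_plus U j)].
Proof.
split.
- exact: Uprime_unitary.
- exact: Uprime_act.
- by move=> j; split; [exact: w_plus_unit | exact: w_minus_unit].
- by rewrite prod_refl_w_minus.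
- by rewrite prod_refl_w_plus.
Qed.
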